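(* Let $S$ be a hyperbolic Riemann surface with universal cover $\mathbb H^+$ and deck group action $\rho_{can}:\pi_1(S,x_0)\to PSL(2,\mathbb R)$, and let $T^1\mathcal F_{can}=(T^1\mathbb H^+\times\mathbb CP^1)/\pi_1(S,x_0)$ with action $\gamma\cdot(v,z)=(\rho_{can}(\gamma)_*v,\rho_{can}(\gamma)z)$. Let $X_{can}$ be the generator of the foliated geodesic flow (induced by $(X,0)$, $X$ the geodesic flow generator on $T^1\mathbb H^+$) and $Y$ the vertical vector field induced by $\tilde Y$. Then the vector field $Z=X_{can}+Y$ is tangent to the diagonal $\Delta_*(T^1S)\subset T^1\mathcal F_{can}$.
   Context: Let $\iota:\mathbb H^+\to\mathbb CP^1$ be the inclusion. For $v\in T^1\mathbb H^+$ based at $p$, $\tilde\sigma^\pm(v)\in\partial\mathbb H^+$ are the forward/backward endpoints of the geodesic tangent to $v$, and $Y_v$ is the holomorphic vector field on $\mathbb CP^1$ vanishing at $\tilde\sigma^\pm(v)$ with $Y_v(\iota(p))=\iota_*(v)$; $\tilde Y(v,\cdot)=Y_v(\cdot)$. The diagonal $\Delta_*(T^1S)$ is the image in the quotient of $\{(v,\iota(p)):v\in T^1_p\mathbb H^+\}$. *)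

(* Everything is formalized on the universal
   cover  T^1 H^+ x CP^1. *)
From Stdlib Require Import Reals.
From Coquelicot Require Import Coquelicot.
Open Scope R_scope.

Definition in_Hplus (p : C) : Prop := 0 < Im p.

(* Unit tangent bundle T^1 H^+ : a pair (p, w), w a tangent vector at p
   (identified with a complex number) of hyperbolic length
   |w| / Im p = 1 for the metric |dz|^2 / (Im z)^2. *)
Definition in_T1H (v : C * C) : Prop :=
  in_Hplus (fst v) /\ Cmod (snd v) = Im (fst v).

(* The geodesic equations
     x'' - (2/y) x' y' = 0,   y'' + (x'^2 - y'^2)/y = 0
   are written in complex form  gam'' = - i (gam')^2 / Im gam. *)
Definition hyp_geodesic (gam gam1 gam2 : R -> C) : Prop :=
  (forall t, in_Hplus (gam t)) /\
  (forall t, is_derive gam t (gam1 t)) /\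
  (forall t, is_derive gam1 t (gam2 t)) /\
  (forall t, gam2 t = Cmult (Copp Ci) (Cmult (gam1 t) (gam1 t)) / RtoC (Im (gam t)))%C.

(* Boundary points of H^+ in CP^1 : R u {oo}; [Some a] = a in R,
   [None] = oo. *)
Definition bdry_pt := option R.

(* The curve gam tends to the boundary point e along the filter F
   (F = Rbar_locally p_infty for the forward endpoint,
    F = Rbar_locally m_infty for the backward endpoint). *)
Definition tends_to_bdry (gam : R -> C) (F : (R -> Prop) -> Prop) (e : bdry_pt)
  : Prop :=
  match e with
  | Some a => filterlim gam F (locally (RtoC a))
  | None => filterlim (fun t => Cmod (gam t)) F (Rbar_locally p_infty)
  end.

(* Holomorphic vector fields on CP^1: in the affine chart z they are
   exactly  Y(z) = (c0 + c1 z + c2 z^2) d/dz ;  we represent Y by (c0,c1,c2). *)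
Definition hvf := (C * C * C)%type.

Definition hvf_eval (Y : hvf) (z : C) : C :=
  let '(c0, c1, c2) := Y in (c0 + c1 * z + c2 * (z * z))%C.

(* Y vanishes at the point e of R u {oo} (at oo: in the chart u = 1/z the
   field is -(c0 u^2 + c1 u + c2) d/du, which vanishes at u = 0 iff c2 = 0). *)
Definition hvf_vanishes_at (Y : hvf) (e : bdry_pt) : Prop :=
  match e with
  | Some a => hvf_eval Y (RtoC a) = 0%C
  | None => let '(_, _, c2) := Y in c2 = 0%C
  end.

(* The lifted diagonal {(v, iota(p)) : v in T^1_p H^+}, a subset of
   T^1 H^+ x CP^1; it lies in the affine chart C of CP^1. *)
Definition diagonal (q : (C * C) * C) : Prop :=
  in_T1H (fst q) /\ snd q = fst (fst q).

Definition tangent_to (D : (C * C) * C -> Prop) (q0 xi : (C * C) * C) : Prop :=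
  exists c : R -> (C * C) * C,
    (forall t, D (c t)) /\ c 0 = q0 /\ is_derive c 0 xi.

From Stdlib Require Import Reals Lra Psatz.
From Coquelicot Require Import Coquelicot.
Open Scope R_scope.

(* The curve t |-> ((gam t, gam' t), gam t) stays in the diagonal, because the
   geodesic equations conserve the hyperbolic speed |gam'| / Im gam; its
   velocity at t = 0 is (X(v), gam'(0)) = (X(v), w) = (X(v), Y_v(p)). *)

Lemma is_derive_pair {U V : NormedModule R_AbsRing} (f : R -> U) (g : R -> V)
    x a b :
  is_derive f x a -> is_derive g x b -> is_derive (fun t => (f t, g t)) x (a, b).
Proof.
  intros Hf Hg; eapply filterdiff_ext_lin.
  - apply (filterdiff_comp'_2 f g (fun u v => (u, v)) x _ _ (fun u v => (u, v)) Hf Hg).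
    apply filterdiff_linear, is_linear_prod; [apply is_linear_fst | apply is_linear_snd].
  - reflexivity.
Qed.

Lemma is_derive_fst {U V : NormedModule R_AbsRing} (f : R -> U * V) x l :
  is_derive f x l -> is_derive (fun t => fst (f t)) x (fst l).
Proof.
  intros Hf; eapply filterdiff_ext_lin.
  - apply (filterdiff_comp' f fst x _ fst Hf), filterdiff_linear, is_linear_fst.
  - reflexivity.
Qed.

Lemma is_derive_snd {U V : NormedModule R_AbsRing} (f : R -> U * V) x l :
  is_derive f x l -> is_derive (fun t => snd (f t)) x (snd l).
Proof.
  intros Hf; eapply filterdiff_ext_lin.
  - apply (filterdiff_comp' f snd x _ snd Hf), filterdiff_linear, is_linear_snd.
  - reflexivity.
Qed.

Lemma is_derive_ext_val (f : R -> R) (x l l' : R) :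
  is_derive f x l -> l = l' -> is_derive f x l'.
Proof. now intros H ->. Qed.

Lemma derive_zero_const (f : R -> R) :
  (forall t, is_derive f t 0) -> forall t, f t = f 0.
Proof.
  intros H t; destruct (Rtotal_order t 0) as [Hlt | [-> | Hgt]].
  - apply (eq_is_derive f t 0); [intros; apply H | exact Hlt].
  - reflexivity.
  - symmetry; apply (eq_is_derive f 0 t); [intros; apply H | exact Hgt].
Qed.

(* The generic [is_derive_plus] and [is_derive_mult] do not unify with goals
   stated with [Rplus] and [Rmult]. *)
Lemma is_derive_Rplus (f g : R -> R) x df dg :
  is_derive f x df -> is_derive g x dg ->
  is_derive (fun t => f t + g t) x (df + dg).
Proof. exact (is_derive_plus f g x df dg). Qed.

Lemma is_derive_Rmult (f g : R -> R) x df dg :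
  is_derive f x df -> is_derive g x dg ->
  is_derive (fun t => f t * g t) x (df * g x + f x * dg).
Proof. intros Hf Hg; exact (is_derive_mult f g x df dg Hf Hg Rmult_comm). Qed.

Section HyperbolicGeodesic.

Variables gam gam1 gam2 : R -> C.
Hypothesis geod : hyp_geodesic gam gam1 gam2.

Let im_gam_pos t : 0 < Im (gam t).
Proof. apply geod. Qed.

Lemma geodesic_im_derive t : is_derive (fun s => Im (gam s)) t (Im (gam1 t)).
Proof. apply (is_derive_snd gam), geod. Qed.

Lemma geodesic_re_accel t :
  is_derive (fun s => Re (gam1 s)) t
    (2 * Re (gam1 t) * Im (gam1 t) / Im (gam t)).
Proof.
  destruct geod as (_ & _ & Hd2 & Heq).
  eapply is_derive_ext_val; [apply (is_derive_fst gam1), Hd2 |].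
  rewrite Heq; pose proof (im_gam_pos t).
  destruct (gam1 t) as [u v]; cbn in *; unfold Im in *; field; lra.
Qed.

Lemma geodesic_im_accel t :
  is_derive (fun s => Im (gam1 s)) t
    ((Im (gam1 t) * Im (gam1 t) - Re (gam1 t) * Re (gam1 t)) / Im (gam t)).
Proof.
  destruct geod as (_ & _ & Hd2 & Heq).
  eapply is_derive_ext_val; [apply (is_derive_snd gam1), Hd2 |].
  rewrite Heq; pose proof (im_gam_pos t).
  destruct (gam1 t) as [u v]; cbn in *; unfold Im in *; field; lra.
Qed.

Definition hyp_speed_sq t :=
  (Re (gam1 t) * Re (gam1 t) + Im (gam1 t) * Im (gam1 t))
  / (Im (gam t) * Im (gam t)).

Lemma hyp_speed_sq_derive t : is_derive hyp_speed_sq t 0.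
Proof.
  pose proof (im_gam_pos t) as Hy.
  unfold hyp_speed_sq.
  eapply is_derive_ext_val.
  - apply is_derive_div; [| | nra].
    + exact (is_derive_Rplus _ _ _ _ _
               (is_derive_Rmult _ _ _ _ _ (geodesic_re_accel t) (geodesic_re_accel t))
               (is_derive_Rmult _ _ _ _ _ (geodesic_im_accel t) (geodesic_im_accel t))).
    + exact (is_derive_Rmult _ _ _ _ _ (geodesic_im_derive t) (geodesic_im_derive t)).
  - unfold Re, Im in *; field; lra.
Qed.

Lemma hyp_speed_sq_cmod s :
  hyp_speed_sq s * (Im (gam s) * Im (gam s)) = Cmod (gam1 s) * Cmod (gam1 s).
Proof.
  pose proof (im_gam_pos s); unfold hyp_speed_sq, Cmod.
  rewrite sqrt_sqrt; [unfold Re, Im in *; field; lra |].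
  apply Rplus_le_le_0_compat; apply pow2_ge_0.
Qed.

Lemma geodesic_unit_speed :
  Cmod (gam1 0) = Im (gam 0) -> forall t, Cmod (gam1 t) = Im (gam t).
Proof.
  intros H0 t.
  pose proof (derive_zero_const hyp_speed_sq hyp_speed_sq_derive t) as Hconst.
  pose proof (im_gam_pos 0); pose proof (im_gam_pos t).
  pose proof (hyp_speed_sq_cmod 0) as E0; pose proof (hyp_speed_sq_cmod t) as Et.
  pose proof (Cmod_ge_0 (gam1 t)).
  rewrite H0 in E0.
  assert (S0 : hyp_speed_sq 0 = 1).
  { apply Rmult_eq_reg_r with (Im (gam 0) * Im (gam 0)); nra. }
  rewrite Hconst, S0, Rmult_1_l in Et.
  apply Rsqr_inj; unfold Rsqr; lra.
Qed.

End HyperbolicGeodesic.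

Lemma geodesic_lift_in_diagonal (gam gam1 gam2 : R -> C) :
  hyp_geodesic gam gam1 gam2 -> in_T1H (gam 0, gam1 0) ->
  forall t, diagonal ((gam t, gam1 t), gam t).
Proof.
  intros geod [_ Hunit] t; repeat split; cbn.
  - apply geod.
  - exact (geodesic_unit_speed gam gam1 gam2 geod Hunit t).
Qed.

Theorem proposition7p7 :
  forall (p w : C), in_T1H (p, w) ->
  forall gam gam1 gam2 : R -> C,
    hyp_geodesic gam gam1 gam2 -> gam 0 = p -> gam1 0 = w ->
  forall sp sm : bdry_pt,
    tends_to_bdry gam (Rbar_locally p_infty) sp ->
    tends_to_bdry gam (Rbar_locally m_infty) sm ->
  forall Y : hvf,
    hvf_vanishes_at Y sp -> hvf_vanishes_at Y sm -> hvf_eval Y p = w ->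
    tangent_to diagonal ((p, w), p) ((gam1 0, gam2 0), hvf_eval Y p).
Proof.
  intros p w Hv gam gam1 gam2 geod <- <- sp sm _ _ Y _ _ ->.
  exists (fun t => ((gam t, gam1 t), gam t)); split; [| split].
  - exact (geodesic_lift_in_diagonal gam gam1 gam2 geod Hv).
  - reflexivity.
  - destruct geod as (_ & Hd1 & Hd2 & _).
    exact (is_derive_pair (fun t => (gam t, gam1 t)) gam 0 _ _
             (is_derive_pair gam gam1 0 _ _ (Hd1 0) (Hd2 0)) (Hd1 0)).
Qed.
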